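(* Let $n,m,M$ be positive integers, $A_1,\dots,A_M\in\mathbb{R}^{n\times n}$, $B\in\mathbb{R}^{n\times m}$, $\mathcal{M}=\{1,\dots,M\}$. Given $N\in\mathbb{Z}^+$ and $\omega_N\subset\mathbb{S}\times\mathcal{M}$ with $N$ elements, let $\gamma(\omega_N)$, $P(\omega_N)$, $K(\omega_N)$ be the output of Algorithm 1 (described in the context) run on $\omega_N$, $B$ and some tolerance $\epsilon_{tol}>0$. Suppose $\omega_N$ is an $\epsilon$-covering of $\mathbb{S}\times\mathcal{M}$ for some $\epsilon\in(0,1)$. Then $$\rho(\mathcal{A}_{K(\omega_N)})\le\frac{\gamma(\omega_N)}{1-\kappa(P(\omega_N))\bigl(1-\cos(\delta^{-1}(\epsilon))\bigr)},$$ with the convention that if $\kappa(P(\omega_N))(1-\cos(\delta^{-1}(\epsilon)))\ge1$, the right-hand side is $+\infty$.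
   Context: $\mathbb{S}$ is the unit sphere in $\mathbb{R}^n$ and $\mu$ the uniform probability measure on $\mathbb{S}$. For $x\in\mathbb{S}$, $\theta\in[0,\pi/2]$, $\mathrm{Cap}(x,\theta)=\{v\in\mathbb{S}:|x^\top v|\ge\cos\theta\}$ and $\delta(\theta)=\mu(\mathrm{Cap}(x,\theta))$; $\delta$ is strictly increasing from $[0,\pi/2]$ onto $[0,1]$ with inverse $\delta^{-1}$. Given $\epsilon\in(0,1)$ and $\theta=\delta^{-1}(\epsilon)$, a set $\omega\subset\mathbb{S}\times\mathcal{M}$ is an $\epsilon$-covering of $\mathbb{S}\times\mathcal{M}$ if for every $(x,\sigma)\in\mathbb{S}\times\mathcal{M}$ there exists $z\in\mathbb{S}$ with $(z,\sigma)\in\omega$ and $|z^\top x|\ge\cos\theta$. For $P\succ0$, $\kappa(P)=\lambda_{\max}(P)/\lambda_{\min}(P)$. For $K\in\mathbb{R}^{m\times n}$, $\mathcal{A}_K=\{A_1+BK,\dots,A_M+BK\}$ and $\rho(\mathcal{A}_K)=\lim_{k\to\infty}\max_{(\sigma_0,\dots,\sigma_{k-1})\in\mathcal{M}^k}\|(A_{\sigma_{k-1}}+BK)\cdots(A_{\sigma_0}+BK)\|^{1/k}$ is its joint spectral radius. Algorithm 1 (uses only $B$, the points $x$ and the successors $A_\sigma x$ for $(x,\sigma)\in\omega_N$): define Problem (K-step) for fixed $P$: minimize $\gamma\ge0$ over $(\gamma,K)$ subject to $\begin{pmatrix}\gamma^2x^\top Px & (A_\sigma x+BKx)^\top P\\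 P(A_\sigma x+BKx) & P\end{pmatrix}\succeq0$ for all $(x,\sigma)\in\omega_N$. Define Problem (P-step) for fixed $K$: minimize $\gamma\ge0$ over $(\gamma,P)$ subject to $(A_\sigma x+BKx)^\top P(A_\sigma x+BKx)\le\gamma^2x^\top Px$ for all $(x,\sigma)\in\omega_N$ and $P\succeq I$. Initialize $k=0$, $P_0=I_n$, and $(K_0,\gamma_0)$ a solution of (K-step) with $P=P_0$. Iterate: obtain $P_{k+1}$ from (P-step) with $K=K_k$; obtain $(K_{k+1},\gamma_{k+1})$ from (K-step) with $P=P_{k+1}$; if $|\gamma_{k+1}-\gamma_k|<\epsilon_{tol}$, output $\gamma(\omega_N)=\gamma_{k+1}$, $P(\omega_N)=P_{k+1}$, $K(\omega_N)=K_{k+1}$ and stop; otherwise set $k\leftarrow k+1$ and repeat. *)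

From HB Require Import structures.
From mathcomp Require Import all_boot all_order all_algebra.
From mathcomp Require Import all_classical all_reals all_analysis.
Set Implicit Arguments. Unset Strict Implicit. Unset Printing Implicit Defensive.
Import Order.TTheory GRing.Theory Num.Theory.
Import numFieldNormedType.Exports.
Local Open Scope classical_set_scope.
Local Open Scope ring_scope.

Section Defs.
Variable R : realType.

Definition dotv n (x y : 'cV[R]_n) : R := (x^T *m y) 0 0.
Definition enorm n (x : 'cV[R]_n) : R := Num.sqrt (dotv x x).

Definition sphere (n : nat) : set 'cV[R]_n := [set x | dotv x x = 1].
Arguments sphere n : clear implicits.
Definition uball (n : nat) : set 'cV[R]_n := [set y | dotv y y <= 1].
Arguments uball n : clear implicits.

Definition Cap n (x : 'cV[R]_n) (theta : R) : set 'cV[R]_n :=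
  [set v | sphere n v /\ cos theta <= `|dotv x v|].

Fixpoint iint (n : nat) : ('cV[R]_n -> \bar R) -> \bar R :=
  match n return ('cV[R]_n -> \bar R) -> \bar R with
  | 0%N => fun f => f 0
  | n'.+1 => fun f =>
      (\int[@lebesgue_measure R]_t iint (fun v : 'cV[R]_n' => f (col_mx (const_mx (t : R) : 'cV[R]_1) v : 'cV[R]_(1 + n'))))%E
  end.

Definition vol n (S : set 'cV[R]_n) : \bar R := iint (fun v => (\1_S v)%:E).

Definition cone n (A : set 'cV[R]_n) : set 'cV[R]_n :=
  [set y | exists t, exists v, [/\ 0 <= t <= 1, A v & y = t *: v]].

(* uniform probability measure on the sphere (normalized cone measure) *)
Definition mu_sphere n (A : set 'cV[R]_n) : R :=
  fine (vol (cone A)) / fine (vol (uball n)).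

Definition e0 (n : nat) : 'cV[R]_n := \col_(i < n) ((nat_of_ord i == 0%N)%:R).

(* delta(theta) = mu(Cap(x, theta)) (independent of x in S; we use x = e_1) *)
Definition delta (n : nat) (theta : R) : R := mu_sphere (Cap (e0 n) theta).

(* ---------- eps-covering (with theta = delta^{-1}(eps)) ---------- *)
Definition covering n M (omega : seq ('cV[R]_n * 'I_M)) (theta : R) : Prop :=
  forall (x : 'cV[R]_n) (s : 'I_M), sphere n x ->
    exists z, (z, s) \in omega /\ cos theta <= `|dotv z x|.

Definition psd k (Q : 'M[R]_k) : Prop :=
  Q^T = Q /\ forall v : 'cV[R]_k, 0 <= (v^T *m Q *m v) 0 0.

Definition lambda_max n (P : 'M[R]_n) : R := sup [set a | eigenvalue P a].
Definition lambda_min n (P : 'M[R]_n) : R := inf [set a | eigenvalue P a].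
Definition kappa n (P : 'M[R]_n) : R := lambda_max P / lambda_min P.

Definition opnorm n (X : 'M[R]_n) : R :=
  sup [set enorm (X *m x) | x in sphere n].

Definition closed_loop n m M (A : 'I_M -> 'M[R]_n) (B : 'M[R]_(n, m))
  (K : 'M[R]_(m, n)) (s : 'I_M) : 'M[R]_n := A s + B *m K.

(* mprod F [:: s0; s1; ...; s_{k-1}] = F s_{k-1} * ... * F s1 * F s0 *)
Fixpoint mprod n M (F : 'I_M -> 'M[R]_n) (s : seq 'I_M) : 'M[R]_n :=
  match s with
  | [::] => 1%:M
  | s0 :: s' => mprod F s' *m F s0
  end.

Definition jsr_term n M (F : 'I_M -> 'M[R]_n) (k : nat) : R :=
  (\big[Num.max/0]_(s : k.-tuple 'I_M) opnorm (mprod F s)) `^ (k%:R^-1).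

Definition jsr n M (F : 'I_M -> 'M[R]_n) : R := limn (jsr_term F).

Definition Kstep_LMI n m M (A : 'I_M -> 'M[R]_n) (B : 'M[R]_(n, m))
  (P : 'M[R]_n) (g : R) (K : 'M[R]_(m, n)) (x : 'cV[R]_n) (s : 'I_M)
  : 'M[R]_(1 + n) :=
  let y := A s *m x + B *m K *m x in
  block_mx ((g ^+ 2) *: (x^T *m P *m x)) (y^T *m P) (P *m y) P.

Definition Kstep_feasible n m M (A : 'I_M -> 'M[R]_n) (B : 'M[R]_(n, m))
  (omega : seq ('cV[R]_n * 'I_M)) (P : 'M[R]_n) (g : R) (K : 'M[R]_(m, n)) :=
  0 <= g /\ forall xs, xs \in omega -> psd (Kstep_LMI A B P g K xs.1 xs.2).

Definition Kstep_sol n m M (A : 'I_M -> 'M[R]_n) (B : 'M[R]_(n, m))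
  (omega : seq ('cV[R]_n * 'I_M)) (P : 'M[R]_n) (g : R) (K : 'M[R]_(m, n)) :=
  Kstep_feasible A B omega P g K /\
  forall g' K', Kstep_feasible A B omega P g' K' -> g <= g'.

Definition Pstep_feasible n m M (A : 'I_M -> 'M[R]_n) (B : 'M[R]_(n, m))
  (omega : seq ('cV[R]_n * 'I_M)) (K : 'M[R]_(m, n)) (g : R) (P : 'M[R]_n) :=
  [/\ 0 <= g,
      forall xs, xs \in omega ->
        let y := A xs.2 *m xs.1 + B *m K *m xs.1 in
        (y^T *m P *m y) 0 0 <= g ^+ 2 * (xs.1^T *m P *m xs.1) 0 0
    & psd (P - 1%:M)].

Definition Pstep_sol n m M (A : 'I_M -> 'M[R]_n) (B : 'M[R]_(n, m))
  (omega : seq ('cV[R]_n * 'I_M)) (K : 'M[R]_(m, n)) (g : R) (P : 'M[R]_n) :=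
  Pstep_feasible A B omega K g P /\
  forall g' P', Pstep_feasible A B omega K g' P' -> g <= g'.

Definition alg1_output n m M (A : 'I_M -> 'M[R]_n) (B : 'M[R]_(n, m))
  (omega : seq ('cV[R]_n * 'I_M)) (tol : R)
  (gout : R) (Pout : 'M[R]_n) (Kout : 'M[R]_(m, n)) : Prop :=
  exists (Ps : nat -> 'M[R]_n) (Ks : nat -> 'M[R]_(m, n)) (gs gPs : nat -> R)
         (k : nat),
  [/\ Ps 0%N = 1%:M /\ Kstep_sol A B omega (Ps 0%N) (gs 0%N) (Ks 0%N),
      forall j, (j <= k)%N ->
        Pstep_sol A B omega (Ks j) (gPs j.+1) (Ps j.+1) /\
        Kstep_sol A B omega (Ps j.+1) (gs j.+1) (Ks j.+1),
      forall j, (j < k)%N -> tol <= `|gs j.+1 - gs j|,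
      `|gs k.+1 - gs k| < tol
    & [/\ gout = gs k.+1, Pout = Ps k.+1 & Kout = Ks k.+1]].

End Defs.
Arguments sphere {R} n.
Arguments uball {R} n.
Arguments e0 {R} n.
Arguments delta {R} n theta.

(* A Schur complement
   turns the K-step LMI into [|F z|_P <= gamma |z|_P] at every sample [(z, sigma)],
   where [F = A_sigma + B K] and [|x|_P^2 = x^T P x].  For a fixed mode the ratio
   [|F x|_P / |x|_P] is maximal at a generalized eigenvector [v] of [(F^T P F, P)];
   the covering provides a sample [z] with [z^T v >= cos theta] (up to sign), and
   [lambda_min |x|^2 <= x^T P x <= lambda_max |x|^2] gives
   [z^T P v >= |z|_P |v|_P (1 - kappa (1 - cos theta))].  Cauchy-Schwarz for the
   form [F^T P F] then bounds the maximal ratio by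
   [L = gamma / (1 - kappa (1 - cos theta))].  So every product of [k] modes has
   operator norm at most [sqrt kappa * L^k], and the joint spectral radius is at
   most [L]. *)

From HB Require Import structures.
From mathcomp Require Import all_boot all_order all_algebra.
From mathcomp Require Import all_classical all_reals all_analysis.
From mathcomp Require Import ring lra.
Import Order.TTheory GRing.Theory Num.Theory.
Import numFieldNormedType.Exports.
Set Implicit Arguments. Unset Strict Implicit. Unset Printing Implicit Defensive.
Local Open Scope classical_set_scope.
Local Open Scope ring_scope.

Section BilinearForm.
Variable R : realType.
Implicit Types (n : nat).

Definition bform n (H : 'M[R]_n) (x y : 'cV[R]_n) : R := (x^T *m H *m y) 0 0.

Lemma bformE n (H : 'M[R]_n) x y :
  bform H x y = \sum_i \sum_j x i 0 * H i j * y j 0.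
Proof.
rewrite /bform mxE exchange_big /=; apply: eq_bigr => j _.
by rewrite mxE big_distrl /=; apply: eq_bigr => i _; rewrite mxE.
Qed.

Lemma bform_sym n (H : 'M[R]_n) x y : H^T = H -> bform H x y = bform H y x.
Proof.
move=> HT; rewrite /bform -[in RHS]HT.
have -> : y^T *m H^T *m x = (x^T *m H *m y)^T by rewrite !trmx_mul trmxK mulmxA.
by rewrite [in RHS]mxE.
Qed.

Lemma bformDl n (H : 'M[R]_n) x1 x2 y :
  bform H (x1 + x2) y = bform H x1 y + bform H x2 y.
Proof. by rewrite /bform linearD /= !mulmxDl mxE. Qed.

Lemma bformDr n (H : 'M[R]_n) x y1 y2 :
  bform H x (y1 + y2) = bform H x y1 + bform H x y2.
Proof. by rewrite /bform mulmxDr mxE. Qed.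

Lemma bformZl n (H : 'M[R]_n) a x y : bform H (a *: x) y = a * bform H x y.
Proof. by rewrite /bform linearZ /= -!scalemxAl mxE. Qed.

Lemma bformZr n (H : 'M[R]_n) a x y : bform H x (a *: y) = a * bform H x y.
Proof. by rewrite /bform -scalemxAr mxE. Qed.

Lemma bformNl n (H : 'M[R]_n) x y : bform H (- x) y = - bform H x y.
Proof. by rewrite -scaleN1r bformZl mulN1r. Qed.

Lemma bformNr n (H : 'M[R]_n) x y : bform H x (- y) = - bform H x y.
Proof. by rewrite -scaleN1r bformZr mulN1r. Qed.

Lemma bformBl n (H : 'M[R]_n) x1 x2 y :
  bform H (x1 - x2) y = bform H x1 y - bform H x2 y.
Proof. by rewrite bformDl bformNl. Qed.

Lemma bformBr n (H : 'M[R]_n) x y1 y2 :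
  bform H x (y1 - y2) = bform H x y1 - bform H x y2.
Proof. by rewrite bformDr bformNr. Qed.

Lemma bform0l n (H : 'M[R]_n) y : bform H 0 y = 0.
Proof. by rewrite /bform trmx0 !mul0mx mxE. Qed.

Lemma bform_mxB n (H1 H2 : 'M[R]_n) x y :
  bform (H1 - H2) x y = bform H1 x y - bform H2 x y.
Proof. by rewrite /bform mulmxBr mulmxBl !mxE. Qed.

Lemma bform_mxZ n (H : 'M[R]_n) a x y : bform (a *: H) x y = a * bform H x y.
Proof. by rewrite /bform -scalemxAr -scalemxAl mxE. Qed.

Lemma bform_mulmxr n (H F : 'M[R]_n) x y : bform H x (F *m y) = bform (H *m F) x y.
Proof. by rewrite /bform !mulmxA. Qed.

Lemma bform_mulmxl n (H F : 'M[R]_n) x y : bform H (F *m x) y = bform (F^T *m H) x y.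
Proof. by rewrite /bform trmx_mul !mulmxA. Qed.

Lemma bform_eigen n (G H : 'M[R]_n) mu x v :
  G *m v = mu *: (H *m v) -> bform G x v = mu * bform H x v.
Proof. by move=> Ev; rewrite /bform -mulmxA Ev -scalemxAr mxE mulmxA. Qed.

Lemma bform1 n (x y : 'cV[R]_n) : bform 1%:M x y = dotv x y.
Proof. by rewrite /bform mulmx1. Qed.

Lemma dotvC n (x y : 'cV[R]_n) : dotv x y = dotv y x.
Proof. by rewrite -!bform1 bform_sym // trmx1. Qed.

Lemma dotvE n (x : 'cV[R]_n) : dotv x x = \sum_i x i 0 ^+ 2.
Proof. by rewrite /dotv mxE; apply: eq_bigr => i _; rewrite mxE expr2. Qed.

Lemma dotv_ge0 n (x : 'cV[R]_n) : 0 <= dotv x x.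
Proof. by rewrite dotvE sumr_ge0 // => i _; rewrite sqr_ge0. Qed.

Lemma dotv_gt0 n (x : 'cV[R]_n) : x != 0 -> 0 < dotv x x.
Proof.
move=> nx; rewrite lt_def dotv_ge0 andbT; apply: contra nx.
rewrite dotvE psumr_eq0 => [/allP x0|i _]; last exact: sqr_ge0.
apply/eqP/matrixP => i j; rewrite (ord1 j) mxE.
by apply/eqP; rewrite -sqrf_eq0; apply: (implyP (x0 i (mem_index_enum i))).
Qed.

Lemma sqr_coord_le_dotv n (x : 'cV[R]_n) i : x i 0 ^+ 2 <= dotv x x.
Proof. by rewrite dotvE (bigD1 i) //= lerDl sumr_ge0 // => j _; exact: sqr_ge0. Qed.

Lemma sphere_normalize n (x : 'cV[R]_n) :
  x != 0 -> sphere n ((Num.sqrt (dotv x x))^-1 *: x).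
Proof.
move=> nx; have x0 := dotv_gt0 nx.
rewrite /sphere /= -bform1 bformZl bformZr bform1 mulrA -expr2 exprVn.
by rewrite sqr_sqrtr ?mulVf ?gt_eqF // ltW.
Qed.

Lemma sphere_nonempty n : (0 < n)%N -> exists x : 'cV[R]_n, sphere n x.
Proof.
move=> n0; pose u : 'cV[R]_n := const_mx 1.
have nu : u != 0.
  by apply/eqP => /matrixP /(_ (Ordinal n0) 0) /eqP; rewrite !mxE oner_eq0.
by exists ((Num.sqrt (dotv u u))^-1 *: u); exact: sphere_normalize.
Qed.

Lemma normrM_le_sqr (a b S : R) : a ^+ 2 <= S -> b ^+ 2 <= S -> `|a| * `|b| <= S.
Proof.
move=> ha hb; rewrite -[a ^+ 2]real_normK ?num_real // in ha.
rewrite -[b ^+ 2]real_normK ?num_real // in hb.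
have := sqr_ge0 (`|a| - `|b|); rewrite sqrrB; lra.
Qed.

Lemma bform_bounded n (H : 'M[R]_n) :
  exists2 C, 0 <= C & forall x, bform H x x <= C * dotv x x.
Proof.
exists (\sum_i \sum_j `|H i j|); first by rewrite sumr_ge0 // => i _; rewrite sumr_ge0.
move=> x; apply: le_trans (ler_norm _) _; rewrite bformE big_distrl /=.
apply: le_trans (ler_norm_sum _ _ _) _; apply: ler_sum => i _.
rewrite big_distrl /=; apply: le_trans (ler_norm_sum _ _ _) _; apply: ler_sum => j _.
rewrite !normrM mulrAC [X in _ <= X]mulrC; apply: ler_wpM2r => //.
exact: normrM_le_sqr (sqr_coord_le_dotv x i) (sqr_coord_le_dotv x j).
Qed.

Lemma bform_cauchy_schwarz n (H : 'M[R]_n) x y :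
  H^T = H -> (forall v, 0 <= bform H v v) ->
  bform H x y ^+ 2 <= bform H x x * bform H y y.
Proof.
move=> HT Hpsd.
have E t : bform H (x + t *: y) (x + t *: y) =
    bform H x x + 2 * t * bform H x y + t ^+ 2 * bform H y y.
  by rewrite !(bformDl, bformDr, bformZl, bformZr) [bform H y x]bform_sym //; ring.
have c0 := Hpsd y.
set a := bform H x x in E *; set b := bform H x y in E *.
set c := bform H y y in E c0 *.
have [{}c0|cpos] := eqVneq c 0.
  have [->|bn0] := eqVneq b 0; first by rewrite c0 expr0n mulr0.
  (* with [c = 0] the quadratic in [t] is affine and must still be nonnegative *)
  have := Hpsd (x + (- (a + 1) / (2 * b)) *: y); rewrite E c0 mulr0 addr0.
  have -> : 2 * (- (a + 1) / (2 * b)) * b = - (a + 1) by field.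
  lra.
have cp : 0 < c by rewrite lt_def cpos c0.
have := Hpsd (x + (- b / c) *: y); rewrite E.
have -> : a + 2 * (- b / c) * b + (- b / c) ^+ 2 * c = a - b ^+ 2 / c.
  by field; rewrite gt_eqF.
by rewrite subr_ge0 ler_pdivrMr.
Qed.

End BilinearForm.

Section GeneralizedEigen.
Variable R : realType.
Implicit Types (n : nat).

Lemma psd_unitmx_coercive n (H : 'M[R]_n) :
  H^T = H -> (forall v, 0 <= bform H v v) -> H \in unitmx ->
  exists2 C, 0 <= C & forall x, dotv x x <= C * bform H x x.
Proof.
move=> HT Hpsd Hu; pose W := invmx H.
have [C C0 WC] := bform_bounded W^T; exists C => // x.
(* [x^T x = x^T H (H^-1 x)], so Cauchy-Schwarz for [H] bounds [|x|^4]. *)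
have := bform_cauchy_schwarz x (W *m x) HT Hpsd.
rewrite bform_mulmxr mulmxV // bform1 bform_mulmxl bform_mulmxr -mulmxA mulmxV //.
rewrite mulmx1 => cs.
have [x0|xpos] := eqVneq (dotv x x) 0; first by rewrite x0 mulr_ge0.
have xp : 0 < dotv x x by rewrite lt_def xpos dotv_ge0.
rewrite -(ler_pM2r xp) -expr2; apply: le_trans cs _.
by rewrite mulrAC [leLHS]mulrC; apply: ler_wpM2r; rewrite ?Hpsd ?WC.
Qed.

Lemma nonunitmx_kernel n (H : 'M[R]_n) :
  H \notin unitmx -> exists2 w : 'cV[R]_n, w != 0 & H *m w = 0.
Proof.
rewrite unitmxE unitfE negbK -det_tr => /det0P [v nv vH].
by exists v^T; rewrite ?trmx_eq0 // -[H]trmxK -trmx_mul vH trmx0.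
Qed.

(* [mu] is the supremum of the Rayleigh quotient [x^T G x / x^T Q x]; if it
   were not attained, [mu Q - G] would be invertible, hence coercive, and
   [mu] could be lowered. *)
Lemma generalized_eigen_max n (G Q : 'M[R]_n) q :
  (0 < n)%N -> Q^T = Q -> G^T = G ->
  0 < q -> (forall x, q * dotv x x <= bform Q x x) ->
  exists mu (v : 'cV[R]_n), [/\ v != 0, G *m v = mu *: (Q *m v)
                 & forall x, bform G x x <= mu * bform Q x x].
Proof.
move=> n0 QT GT q0 Qq.
have Qpos x : x != 0 -> 0 < bform Q x x.
  by move=> nx; apply: lt_le_trans (Qq x); rewrite mulr_gt0 ?dotv_gt0.
pose S := [set bform G x x / bform Q x x | x in [set x | x != 0]].
have S0 : S !=set0.
  have [x /eqP sx] := sphere_nonempty R n0.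
  have nx : x != 0 by apply: contraTneq sx => ->; rewrite -bform1 bform0l eq_sym oner_neq0.
  by exists (bform G x x / bform Q x x); exists x.
have Sub : has_ubound S.
  have [C C0 GC] := bform_bounded G.
  exists (C / q) => _ [x nx <-]; rewrite ler_pdivrMr ?Qpos //.
  apply: le_trans (GC x) _; rewrite -mulrA; apply: ler_wpM2l => //.
  by rewrite ler_pdivlMl.
set mu := sup S.
have Hle x : bform G x x <= mu * bform Q x x.
  have [->|nx] := eqVneq x 0; first by rewrite !bform0l mulr0.
  by rewrite -ler_pdivrMr ?Qpos //; apply: ub_le_sup => //; exists x.
pose Q' := mu *: Q - G.
have Q'T : Q'^T = Q' by rewrite /Q' linearB /= linearZ /= QT GT.
have Q'E x : bform Q' x x = mu * bform Q x x - bform G x x.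
  by rewrite bform_mxB bform_mxZ.
have Q'psd x : 0 <= bform Q' x x by rewrite Q'E subr_ge0.
have nU : Q' \notin unitmx.
  apply/negP => /(psd_unitmx_coercive Q'T Q'psd) [C C0 Q'C].
  have [CQ CQ0 QC] := bform_bounded Q.
  pose K := (CQ + 1) * (C + 1).
  have Kp : 0 < K by rewrite mulr_gt0 // ltr_wpDl.
  have QK x : bform Q x x <= K * bform Q' x x.
    have := QC x; have := Q'C x; have := Q'psd x; have := dotv_ge0 x; rewrite /K; nra.
  have : mu <= mu - K^-1.
    apply: ge_sup => // _ [x nx <-].
    rewrite ler_pdivrMr ?Qpos // mulrBl.
    have := QK x; rewrite Q'E -ler_pdivrMl // mulrC; lra.
  have : 0 < K^-1 by rewrite invr_gt0.
  lra.
have [w nw Q'w] := nonunitmx_kernel nU.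
exists mu, w; split => //.
by move/eqP: Q'w; rewrite /Q' mulmxBl -scalemxAl subr_eq0 => /eqP.
Qed.

Lemma generalized_eigen_cauchy_schwarz n (G P : 'M[R]_n) mu g (z v : 'cV[R]_n) :
  G^T = G -> (forall x, 0 <= bform G x x) -> (forall x, 0 <= bform P x x) ->
  G *m v = mu *: (P *m v) -> 0 < mu ->
  bform G z z <= g ^+ 2 * bform P z z ->
  mu * bform P z v ^+ 2 <= g ^+ 2 * bform P z z * bform P v v.
Proof.
move=> GT Gpsd Ppsd Ev mu0 Gz.
have := bform_cauchy_schwarz z v GT Gpsd.
rewrite (bform_eigen z Ev) (bform_eigen v Ev) => cs.
rewrite -(ler_pM2l mu0) mulrA -expr2 -exprMn; apply: le_trans cs _.
rewrite mulrCA; apply: ler_wpM2l; first exact: ltW.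
by apply: ler_wpM2r.
Qed.

Lemma sym_eigenvalueP n (P : 'M[R]_n) a : P^T = P ->
  eigenvalue P a <-> exists2 x : 'cV[R]_n, x != 0 & P *m x = a *: x.
Proof.
move=> PT; split.
  move=> /eigenvalueP [w wP nw]; exists w^T; first by rewrite trmx_eq0.
  by rewrite -[P]PT -trmx_mul wP linearZ.
move=> [x nx Px]; apply/eigenvalueP; exists x^T; last by rewrite trmx_eq0.
by rewrite -[P]PT -trmx_mul Px linearZ.
Qed.

Lemma sym_eigenvalue_between n (P : 'M[R]_n) lo hi a : P^T = P ->
  (forall x, lo * dotv x x <= bform P x x) ->
  (forall x, bform P x x <= hi * dotv x x) ->
  eigenvalue P a -> lo <= a <= hi.
Proof.
move=> PT Plo Phi /(sym_eigenvalueP _ PT) [x nx Px].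
have xp := dotv_gt0 nx.
have Pxx : bform P x x = a * dotv x x.
  by rewrite -bform1; apply: bform_eigen; rewrite mul1mx.
by apply/andP; split; rewrite -(ler_pM2r xp) -Pxx.
Qed.

Lemma spectral_bounds n (P : 'M[R]_n) q :
  (0 < n)%N -> P^T = P -> 0 < q -> (forall x, q * dotv x x <= bform P x x) ->
  [/\ 0 < lambda_min P,
      forall x, lambda_min P * dotv x x <= bform P x x
    & forall x, bform P x x <= lambda_max P * dotv x x].
Proof.
move=> n0 PT q0 Pq.
have I1 (x : 'cV[R]_n) : 1 * dotv x x <= bform 1%:M x x by rewrite mul1r bform1.
have [hi [v1 [nv1 Pv1 Phi]]] := generalized_eigen_max n0 (trmx1 _ _) PT ltr01 I1.
have [l [v2 [nv2 Pv2 Plo]]] := generalized_eigen_max n0 PT (trmx1 _ _) q0 Pq.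
rewrite mul1mx in Pv1.
have {}Phi x : bform P x x <= hi * dotv x x by rewrite -bform1 Phi.
have lp : 0 < l.
  have v2p := dotv_gt0 nv2.
  have Pv2p : 0 < bform P v2 v2 by apply: lt_le_trans (Pq v2); rewrite mulr_gt0.
  by have := Plo v2; rewrite bform1; nra.
pose lo := l^-1.
have {}Plo x : lo * dotv x x <= bform P x x.
  by rewrite ler_pdivrMl // -bform1 Plo.
have {}Pv2 : P *m v2 = lo *: v2.
  move: Pv2; rewrite mul1mx => /(congr1 ( *:%R lo)).
  by rewrite scalerA mulVf ?gt_eqF ?scale1r.
have E := sym_eigenvalue_between PT Plo Phi.
have Ehi : eigenvalue P hi by apply/(sym_eigenvalueP _ PT); exists v1.
have Elo : eigenvalue P lo by apply/(sym_eigenvalueP _ PT); exists v2.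
have -> : lambda_max P = hi.
  apply/eqP; rewrite eq_le; apply/andP; split.
    by apply: ge_sup; [exists hi | move=> a /E /andP[]].
  by apply: ub_le_sup => //; exists hi => a /E /andP[].
have -> : lambda_min P = lo.
  apply/eqP; rewrite eq_le; apply/andP; split.
    by apply: ge_inf => //; exists lo => a /E /andP[].
  by apply: lb_le_inf; [exists lo | move=> a /E /andP[]].
by split; rewrite // invr_gt0.
Qed.

End GeneralizedEigen.

Section Contraction.
Variables (R : realType) (n : nat) (P : 'M[R]_n) (lmin lmax : R).
Hypotheses (n_gt0 : (0 < n)%N) (PT : P^T = P) (lmin_gt0 : 0 < lmin)
  (P_ge : forall x, lmin * dotv x x <= bform P x x)
  (P_le : forall x, bform P x x <= lmax * dotv x x).

Lemma bform_ge0 x : 0 <= bform P x x.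
Proof. by apply: le_trans (P_ge x); rewrite mulr_ge0 ?dotv_ge0 // ltW. Qed.

(* With [s = sqrt (a b)], [lmin <= s <= (a + b) / 2] and
   [a + b - 2 p = (z - v)^T P (z - v) <= lmax |z - v|^2 <= 2 lmax (1 - c)],
   whence [p >= s - lmax (1 - c) >= s (1 - lmax / lmin (1 - c))]. *)
Lemma bform_cross_lower_bound z v c :
  sphere n z -> sphere n v -> c <= dotv z v ->
  0 < 1 - lmax / lmin * (1 - c) ->
  bform P z z * bform P v v * (1 - lmax / lmin * (1 - c)) ^+ 2
    <= bform P z v ^+ 2.
Proof.
rewrite /sphere /= => z1 v1 czv D0.
set a := bform P z z; set b := bform P v v; set p := bform P z v.
set D := 1 - _; set t := lmax / lmin.
have ha : lmin <= a by have := P_ge z; rewrite z1 mulr1.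
have hb : lmin <= b by have := P_ge v; rewrite v1 mulr1.
have hlmax : lmin <= lmax by have := P_le z; rewrite z1 mulr1 -/a; lra.
have tlmin : t * lmin = lmax by rewrite /t divfK ?gt_eqF.
have t0 : 0 <= t by rewrite divr_ge0 ?ltW //; exact: lt_le_trans hlmax.
have hd : a + b - 2 * p <= lmax * (2 - 2 * c).
  have := P_le (z - v); rewrite -bform1 !(bformBl, bformBr) [bform P v z]bform_sym //.
  rewrite !bform1 [dotv v z]dotvC z1 v1 -/a -/b -/p => h.
  have : lmax * (1 - dotv z v - (dotv z v - 1)) <= lmax * (2 - 2 * c).
    by apply: ler_wpM2l; [exact: le_trans (ltW lmin_gt0) hlmax | lra].
  lra.
have c1 : c <= 1.
  have := dotv_ge0 (z - v); rewrite -bform1 !(bformBl, bformBr) !bform1.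
  by rewrite [dotv v z]dotvC z1 v1; lra.
pose s := Num.sqrt (a * b).
have s0 : 0 <= s by exact: sqrtr_ge0.
have a0 : 0 < a := lt_le_trans lmin_gt0 ha.
have b0 : 0 < b := lt_le_trans lmin_gt0 hb.
have s2 : s ^+ 2 = a * b by rewrite sqr_sqrtr // mulr_ge0 // ltW.
have lmin_s : lmin <= s.
  have : lmin ^+ 2 <= s ^+ 2 by rewrite s2 expr2 ler_pM // ltW.
  by rewrite ler_pXn2r // nnegrE ltW.
have s_am : 2 * s <= a + b by have := sqr_ge0 (a - b); nra.
have sD_p : s * D <= p.
  have : 0 <= t * (s - lmin) * (1 - c).
    by apply: mulr_ge0; [apply: mulr_ge0 |]; rewrite ?subr_ge0.
  by rewrite -tlmin in hd; rewrite /D -/t; lra.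
have sD0 : 0 <= s * D by rewrite mulr_ge0 // ltW.
by rewrite -s2 -exprMn ler_pXn2r // nnegrE // (le_trans sD0 sD_p).
Qed.

Lemma covering_contraction (F : 'M[R]_n) g c :
  0 <= g -> 0 < 1 - lmax / lmin * (1 - c) ->
  (forall v, sphere n v -> exists z, [/\ sphere n z, c <= `|dotv z v|
       & bform P (F *m z) (F *m z) <= g ^+ 2 * bform P z z]) ->
  forall x, bform P (F *m x) (F *m x) <=
            (g / (1 - lmax / lmin * (1 - c))) ^+ 2 * bform P x x.
Proof.
move=> g0 D0 Hcov; set D := 1 - lmax / lmin * (1 - c) in D0 *.
pose G := F^T *m P *m F.
have GE x y : bform P (F *m x) (F *m y) = bform G x y.
  by rewrite bform_mulmxl bform_mulmxr.
have Ppsd := bform_ge0.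
have GT : G^T = G by rewrite /G !trmx_mul trmxK PT mulmxA.
have Gpsd x : 0 <= bform G x x by rewrite -GE.
have [mu [v [nv Ev Hle]]] := generalized_eigen_max n_gt0 PT GT lmin_gt0 P_ge.
suff mu_le : mu <= (g / D) ^+ 2.
  by move=> x; rewrite GE; apply: le_trans (Hle x) (ler_wpM2r (Ppsd x) mu_le).
have [mu_le0|mu_gt0] := lerP mu 0; first exact: le_trans mu_le0 (sqr_ge0 _).
pose u := (Num.sqrt (dotv v v))^-1 *: v.
have u1 : sphere n u := sphere_normalize nv.
have Eu : G *m u = mu *: (P *m u) by rewrite -!scalemxAr Ev !scalerA mulrC.
have [z [z1 zu Fz]] : exists z, [/\ sphere n z, c <= dotv z u
    & bform G z z <= g ^+ 2 * bform P z z].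
  have [z [z1 zu Fz]] := Hcov u u1; rewrite GE in Fz.
  have [zu0|zu0] := lerP 0 (dotv z u); first by exists z; rewrite -(ger0_norm zu0).
  exists (- z); rewrite /sphere /= -!bform1 !(bformNl, bformNr) !opprK !bform1.
  by rewrite -(ltr0_norm zu0).
have := bform_cross_lower_bound z1 u1 zu D0.
have := generalized_eigen_cauchy_schwarz GT Gpsd Ppsd Eu mu_gt0 Fz.
set a := bform P z z; set b := bform P u u; set p := bform P z u => up lo.
have P_sphere w : sphere n w -> 0 < bform P w w.
  rewrite /sphere /= => w1; apply: lt_le_trans (P_ge w); by rewrite w1 mulr1.
have ab0 : 0 < a * b by rewrite mulr_gt0 // P_sphere.
rewrite expr_div_n ler_pdivlMr ?exprn_gt0 // -(ler_pM2r ab0).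
rewrite -mulrA [D ^+ 2 * _]mulrC.
apply: le_trans (ler_wpM2l (ltW mu_gt0) lo) _.
by rewrite -mulrA in up.
Qed.

End Contraction.

Section JointSpectralRadius.
Variable R : realType.
Implicit Types (n M : nat).

Lemma bernoulli_ineq (e : R) k : 0 <= e -> 1 + k%:R * e <= (1 + e) ^+ k.
Proof.
move=> e0; elim: k => [|k IH]; first by rewrite mul0r addr0 expr0.
rewrite exprS -natr1; have ke0 : 0 <= k%:R * e by rewrite mulr_ge0.
apply: le_trans (ler_wpM2l (addr_ge0 ler01 e0) IH); nra.
Qed.

Lemma mprod_contraction n M (F : 'I_M -> 'M[R]_n) (P : 'M[R]_n) L :
  (forall x, 0 <= bform P x x) ->
  (forall s x, bform P (F s *m x) (F s *m x) <= L ^+ 2 * bform P x x) ->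
  forall (s : seq 'I_M) x,
    bform P (mprod F s *m x) (mprod F s *m x) <= (L ^+ size s) ^+ 2 * bform P x x.
Proof.
move=> Ppsd HF; elim => [|s0 s IH] x /=; first by rewrite mul1mx expr0 expr1n mul1r.
rewrite -mulmxA; apply: le_trans (IH _) _.
rewrite [L ^+ (size s).+1]exprS exprMn [L ^+ 2 * _]mulrC -[leRHS]mulrA.
apply: ler_wpM2l; [exact: sqr_ge0 | exact: HF].
Qed.

Lemma opnorm_mprod_le n M (F : 'I_M -> 'M[R]_n) (P : 'M[R]_n) lmin lmax L :
  (0 < n)%N -> 0 < lmin -> 0 <= L ->
  (forall x, lmin * dotv x x <= bform P x x) ->
  (forall x, bform P x x <= lmax * dotv x x) ->
  (forall s x, bform P (F s *m x) (F s *m x) <= L ^+ 2 * bform P x x) ->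
  forall s, opnorm (mprod F s) <= Num.sqrt (lmax / lmin) * L ^+ size s.
Proof.
move=> n0 lmin_gt0 L0 P_ge P_le HF s.
have Ppsd := bform_ge0 lmin_gt0 P_ge.
apply: ge_sup.
  by have [x x1] := sphere_nonempty R n0; exists (enorm (mprod F s *m x)), x.
move=> _ [x /= x1 <-]; rewrite /enorm.
have Px_le : bform P x x <= lmax by have := P_le x; rewrite x1 mulr1.
have lmax0 : 0 <= lmax := le_trans (Ppsd x) Px_le.
have -> : Num.sqrt (lmax / lmin) * L ^+ size s =
          Num.sqrt (lmax / lmin * (L ^+ size s) ^+ 2).
  by rewrite [RHS]sqrtrM ?sqrtr_sqr ?ger0_norm ?exprn_ge0 // divr_ge0 // ltW.
rewrite ler_sqrt; last by rewrite mulr_ge0 ?sqr_ge0 // divr_ge0 // ltW.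
rewrite mulrAC ler_pdivlMr // [leLHS]mulrC.
apply: le_trans (P_ge _) _; apply: le_trans (mprod_contraction Ppsd HF s x) _.
by rewrite mulrC; apply: ler_wpM2r; rewrite ?sqr_ge0.
Qed.

Lemma jsr_term_le n M (F : 'I_M -> 'M[R]_n) k r :
  (0 < k)%N -> 0 <= r -> (forall s : k.-tuple 'I_M, opnorm (mprod F s) <= r ^+ k) ->
  jsr_term F k <= r.
Proof.
move=> k0 r0 Fr; rewrite /jsr_term.
have max_le : \big[Num.max/0]_(s : k.-tuple 'I_M) opnorm (mprod F s) <= r ^+ k.
  by apply: bigmax_le => [|s _]; rewrite ?exprn_ge0 ?Fr.
apply: le_trans (ge0_ler_powR _ _ _ max_le) _.
- by rewrite invr_ge0.
- by rewrite nnegrE bigmax_ge_id.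
- by rewrite nnegrE exprn_ge0.
by rewrite -powR_mulrn // -powRrM mulfV ?powRr1 // pnatr_eq0 -lt0n.
Qed.

Lemma jsr_le_of_growth n M (F : 'I_M -> 'M[R]_n) C L :
  0 <= L -> (forall s, opnorm (mprod F s) <= C * L ^+ size s) -> jsr F <= L.
Proof.
move=> L0 FCL; rewrite /jsr.
have [cvgF|dvgF] := pselect (cvgn (jsr_term F)); last first.
  (* [limn] of a divergent sequence is the default value [0] *)
  by rewrite /lim /lim_in xgetPN // => l hl; apply: dvgF; exact: cvgP hl.
apply/ler_addgt0Pr => d d0.
pose e := d / (L + 1).
have e0 : 0 < e by rewrite divr_gt0 // ltr_wpDl.
have eL : e * L <= d by rewrite mulrAC ler_pdivrMr ?ltr_wpDl //; nra.
apply: limr_le => //; apply: filterS (nbhs_infty_ge (Num.trunc (C / e)).+1) => k kN.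
have C_le : C <= (1 + e) ^+ k.
  apply: le_trans (bernoulli_ineq k (ltW e0)).
  have : C / e < k%:R by apply: lt_le_trans (truncnS_gt _) _; rewrite ler_nat.
  by rewrite ltr_pdivrMr //; lra.
have : jsr_term F k <= (1 + e) * L.
  apply: jsr_term_le; first exact: leq_trans kN.
    by rewrite mulr_ge0 // addr_ge0 // ltW.
  move=> s; apply: le_trans (FCL s) _.
  by rewrite size_tuple exprMn; apply: ler_wpM2r; rewrite ?exprn_ge0.
lra.
Qed.

End JointSpectralRadius.

Lemma psd_lmi_quad_le (R : realType) n (P : 'M[R]_n) g (x y : 'cV[R]_n) :
  psd (block_mx ((g ^+ 2) *: (x^T *m P *m x)) (y^T *m P) (P *m y) P
        : 'M[R]_(1 + n)) ->
  bform P y y <= g ^+ 2 * bform P x x.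
Proof.
move=> [_ /(_ (col_mx 1%:M (- y)))].
rewrite tr_col_mx trmx1 mul_row_block mul_row_col !mul1mx !mulmx1.
rewrite linearN /= !mulNmx mulmxN addrN mul0mx subr0 mulmxA.
have entry (U V : 'M[R]_1) a : (a *: U - V) 0 0 = a * U 0 0 - V 0 0.
  by rewrite !mxE.
by rewrite entry subr_ge0.
Qed.

Lemma psd_sub1mx (R : realType) n (P : 'M[R]_n) :
  psd (P - 1%:M) -> P^T = P /\ forall x, 1 * dotv x x <= bform P x x.
Proof.
move=> [PT Pge]; split; first by move: PT; rewrite linearB /= trmx1 => /addIr.
by move=> x; rewrite mul1r -bform1 -subr_ge0 -bform_mxB; exact: Pge.
Qed.

Theorem lemma3 (R : realType) (n m M : nat)
  (A : 'I_M -> 'M[R]_n) (B : 'M[R]_(n, m))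
  (N : nat) (omega : seq ('cV[R]_n * 'I_M)) (tol eps theta : R)
  (gout : R) (Pout : 'M[R]_n) (Kout : 'M[R]_(m, n)) :
  (0 < n)%N -> (0 < m)%N -> (0 < M)%N -> (0 < N)%N ->
  uniq omega -> size omega = N ->
  (forall xs, xs \in omega -> sphere n xs.1) ->
  0 < tol ->
  alg1_output A B omega tol gout Pout Kout ->
  0 < eps < 1 ->
  0 <= theta <= pi / 2 -> delta n theta = eps ->
  covering omega theta ->
  kappa Pout * (1 - cos theta) < 1 ->
  jsr (closed_loop A B Kout) <= gout / (1 - kappa Pout * (1 - cos theta)).
Proof.
move=> n0 _ _ _ _ _ omega_sphere _ [Ps [Ks [gs [gPs [k [_ steps _ _ [-> -> ->]]]]]]].
move=> _ _ _ cover kappa_lt1.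
have [[[_ _ /psd_sub1mx [PT P_ge1]] _] [[g0 lmi] _]] := steps k (leqnn k).
have [lmin_gt0 P_ge P_le] := spectral_bounds n0 PT ltr01 P_ge1.
rewrite /kappa -subr_gt0 in kappa_lt1 *.
have L0 : 0 <= gs k.+1 / (1 - lambda_max (Ps k.+1) / lambda_min (Ps k.+1) * (1 - cos theta)).
  by rewrite divr_ge0 // ltW.
apply: jsr_le_of_growth L0 (opnorm_mprod_le n0 lmin_gt0 L0 P_ge P_le _) => s.
apply: (covering_contraction n0 PT lmin_gt0 P_ge P_le g0 kappa_lt1) => v v1.
have [z [zin zv]] := cover v s v1; exists z; split => //; first exact: omega_sphere zin.
by have := psd_lmi_quad_le (lmi _ zin); rewrite /closed_loop mulmxDl.
Qed.
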